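(* For every integer $n\ge 1$, the number of lines in $\mathbb{Z}_n^2$ equals $\psi(n^2)$, where $\psi:\mathbb{N}\to\mathbb{N}$ is the multiplicative function with $\psi(1)=1$ and $\psi(p^k)=(p+1)p^{k-1}$ for prime powers $p^k>1$.
   Context: $\mathbb{Z}_n=\mathbb{Z}/n\mathbb{Z}$. A line in $\mathbb{Z}_n^2$ is a translate (as a set) of a cyclic subgroup of order $n$ of the additive group $\mathbb{Z}_n^2$. A function $\psi$ is multiplicative if $\psi(1)=1$ and $\psi(nm)=\psi(n)\psi(m)$ for coprime $n,m$. *)

From HB Require Import structures.
From mathcomp Require Import all_boot all_order all_algebra.
Set Implicit Arguments. Unset Strict Implicit. Unset Printing Implicit Defensive.
Import GRing.Theory.

(* Z_n for n >= 1, as the additive group 'I_(n.-1).+1 (integers mod n). *)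
Notation Zn2 n := ('I_(n.-1).+1 * 'I_(n.-1).+1)%type.

(* The cyclic subgroup <g> of Z_n^2 generated by g: all multiples k*g
   (k ranges over 0..n^2, which covers all multiples since n^2 g = 0). *)
Definition cyc (n : nat) (g : Zn2 n) : {set Zn2 n} :=
  [set (g *+ k)%R | k : 'I_(n ^ 2).+1].

Definition translate (n : nat) (x : Zn2 n) (H : {set Zn2 n}) : {set Zn2 n} :=
  [set (x + h)%R | h in H].

Definition lines (n : nat) : {set {set Zn2 n}} :=
  [set L : {set Zn2 n} | [exists x : Zn2 n, exists g : Zn2 n,
     (#|cyc g| == n) && (L == translate x (cyc g))]].

Definition psi (m : nat) : nat :=
  \prod_(p <- primes m) ((p + 1) * p ^ (logn p m).-1).

From Pilot Require Import Defs.
From mathcomp Require Import all_boot all_order all_algebra all_fingroup all_solvable.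
From mathcomp Require Import zify.
Set Implicit Arguments. Unset Strict Implicit.

(* In any
   finite group, partitioning by the generated subgroup (resp. by the
   underlying subgroup of a coset) gives
     #{elements of order n} = #{cyclic subgroups of order n} * phi(n),
     #{cosets of such subgroups} * n = #{cyclic subgroups of order n} * |G|.
   With |G| = n^2 this yields #lines * phi(n) = n * #{elements of order n}.
   An element (a, b) of Z_n^2 has order n iff gcd(n, a, b) = 1, so the
   elements of order n are counted by Jordan's totient J_2(n).  Finally
   J_2(n) * n = psi(n^2) * phi(n): both sides are products of local factors
   over the primes dividing n, and J_2 obeys the recurrences
   J_2(p m) = p^2 J_2(m) if p | m and J_2(p m) = (p^2 - 1) J_2(m) otherwise. *)

(* The number of pairs (a, b) in [0, n)^2 with gcd(n, a, b) = 1, i.e. the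
   number of elements of order n in Z_n^2 (Jordan's totient J_2(n)). *)
Definition primitive_pairs (n : nat) : nat :=
  \sum_(0 <= a < n) \sum_(0 <= b < n) coprime n (gcdn a b).

Lemma sum_periodic (G : nat -> nat) m k :
  (forall a, G (a %% m) = G a) ->
  \sum_(0 <= a < k * m) G a = k * \sum_(0 <= a < m) G a.
Proof.
move=> G_per; elim: k => [|k IH]; first by rewrite !mul0n big_geq.
rewrite (big_cat_nat _ (n := k * m)) //=; last by rewrite mulSn leq_addl.
rewrite IH mulSn addnC; congr (_ + _).
rewrite -{1}(add0n (k * m)) big_addn addnK.
by apply: eq_bigr => i _; rewrite -G_per addnC modnMDl G_per.
Qed.

Lemma sum2_periodic (F : nat -> nat -> nat) m k :
  (forall a b, F (a %% m) b = F a b) -> (forall a b, F a (b %% m) = F a b) ->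
  \sum_(0 <= a < k * m) \sum_(0 <= b < k * m) F a b =
  k * k * \sum_(0 <= a < m) \sum_(0 <= b < m) F a b.
Proof.
move=> F_perl F_perr.
rewrite (@sum_periodic (fun a => \sum_(0 <= b < k * m) F a b)); last first.
  by move=> a; apply: eq_bigr => b _; rewrite F_perl.
rewrite -mulnA; congr (_ * _); rewrite big_distrr /=.
by apply: eq_bigr => a _; rewrite sum_periodic.
Qed.

Lemma coprime_gcd_modl m a b : coprime m (gcdn (a %% m) b) = coprime m (gcdn a b).
Proof. by rewrite /coprime !gcdnA gcdn_modr. Qed.

Lemma coprime_gcd_modr m a b : coprime m (gcdn a (b %% m)) = coprime m (gcdn a b).
Proof. by rewrite /coprime gcdnCA gcdn_modr gcdnCA. Qed.

Lemma primitive_pairs_scaled k m :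
  \sum_(0 <= a < k * m) \sum_(0 <= b < k * m) coprime m (gcdn a b) =
  k * k * primitive_pairs m.
Proof. by apply: sum2_periodic => a b; rewrite ?coprime_gcd_modl ?coprime_gcd_modr. Qed.

Lemma primitive_pairs_mul_dvd p m :
  prime p -> p %| m -> primitive_pairs (p * m) = p * p * primitive_pairs m.
Proof.
move=> _ p_dvd_m; rewrite -primitive_pairs_scaled.
apply: eq_bigr => a _; apply: eq_bigr => b _.
rewrite coprimeMl; case: (boolP (coprime m _)) => [cop_m|_]; last by rewrite andbF.
by rewrite (coprime_dvdl p_dvd_m cop_m).
Qed.

Lemma sum_multiples (G : nat -> nat) p m : prime p ->
  \sum_(0 <= a < p * m) (p %| a) * G a = \sum_(0 <= a < m) G (p * a).
Proof.
move=> p_pr; elim: m => [|m IH]; first by rewrite muln0 !big_geq.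
rewrite mulnS addnC (big_cat_nat _ (n := p * m)) //=; last by rewrite leq_addr.
rewrite IH big_nat_recr //=; congr (_ + _).
rewrite -{1}(add0n (p * m)) big_addn addKn big_ltn ?prime_gt0 //=.
rewrite add0n dvdn_mulr // mul1n big1_seq ?addn0 // => i /andP [_].
rewrite mem_iota => /andP [i_gt0 i_lt_p].
rewrite dvdn_addl ?dvdn_mulr //.
by case: (boolP (p %| i)) => // /(dvdn_leq i_gt0); lia.
Qed.

(* Recurrence at a new prime: J_2(p m) = (p^2 - 1) J_2(m), stated additively. *)
Lemma primitive_pairs_mul_coprime p m : prime p -> ~~ (p %| m) ->
  primitive_pairs (p * m) + primitive_pairs m = p * p * primitive_pairs m.
Proof.
move=> p_pr p_ndvd_m.
have m_cop_p : coprime m p by rewrite coprime_sym prime_coprime.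
have split_term a b : coprime (p * m) (gcdn a b) +
    (p %| a) * ((p %| b) * coprime m (gcdn a b)) = coprime m (gcdn a b).
  rewrite coprimeMl prime_coprime // dvdn_gcd.
  by case: (p %| a); case: (p %| b); case: (coprime m _).
rewrite -primitive_pairs_scaled.
under [RHS]eq_bigr => a _ do under eq_bigr => b _ do rewrite -split_term.
under [RHS]eq_bigr => a _ do rewrite big_split /=.
rewrite big_split /=; congr (_ + _).
under [RHS]eq_bigr => a _ do rewrite -big_distrr /=.
rewrite sum_multiples //; apply: eq_bigr => a _.
rewrite sum_multiples //; apply: eq_bigr => b _.
by rewrite -muln_gcdr coprimeMr m_cop_p.
Qed.

Lemma prod_logn_recurrence (V : nat -> nat) (f r : nat -> nat -> nat) N :
  (forall q, f q 0 = 1) -> (forall p e, prime p -> f p e.+1 = r p e * f p e) ->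
  V 1 = 1 -> (forall p m, prime p -> 0 < m -> V (p * m) = r p (logn p m) * V m) ->
  forall n, 0 < n -> n < N -> V n = \prod_(q < N | prime q) f q (logn q n).
Proof.
move=> f0 fS V1 VS n; elim: n {-2}n (leqnn n) => [|k IH] n; first by case: n.
move=> n_le_k n_gt0 n_lt_N.
have [n_gt1|n_le1] := ltnP 1 n; last first.
  have -> : n = 1 by lia.
  by rewrite V1 big1 // => q _; rewrite logn1 f0.
set p := pdiv n; have p_pr : prime p := pdiv_prime n_gt1.
have p_gt0 := prime_gt0 p_pr.
set m := n %/ p.
have n_eq : n = p * m by rewrite mulnC divnK // pdiv_dvd.
have m_gt0 : 0 < m by rewrite divn_gt0 // dvdn_leq // pdiv_dvd.
have m_lt_n : m < n by apply: ltn_Pdiv => //; apply: prime_gt1.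
have p_lt_N : p < N.
  by apply: leq_ltn_trans n_lt_N; apply: dvdn_leq => //; apply: pdiv_dvd.
rewrite n_eq VS // (IH m) //; try lia.
rewrite (bigD1 (Ordinal p_lt_N)) //= [in RHS](bigD1 (Ordinal p_lt_N)) //=.
rewrite mulnA (lognM p p_gt0 m_gt0) (logn_prime p p_pr) eqxx add1n fS //.
congr (_ * _); apply: eq_bigr => q /andP [_ q_neq_p].
rewrite (lognM q p_gt0 m_gt0) (logn_prime q p_pr).
suff -> : (nat_of_ord q == p) = false by [].
by apply: contraNF q_neq_p => /eqP q_eq; apply/eqP/val_inj.
Qed.

Lemma prod_primes_bounded n N (F : nat -> nat -> nat) :
  0 < n -> n < N -> (forall q, F q 0 = 1) ->
  \prod_(p <- primes n) F p (logn p n) = \prod_(q < N | prime q) F q (logn q n).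
Proof.
move=> n_gt0 n_lt_N F0.
have -> : \prod_(q < N | prime q) F q (logn q n) =
          \prod_(0 <= q < N | q \in primes n) F q (logn q n).
  rewrite -(big_mkord (fun q => prime q) (fun q => F q (logn q n))).
  rewrite big_mkcond [RHS]big_mkcond; apply: eq_bigr => q _.
  case: (boolP (prime q)) => q_pr; case: (boolP (q \in primes n)) => //.
    by rewrite -logn_gt0 -leqNgt leqn0 => /eqP ->; rewrite F0.
  by rewrite mem_primes (negPf q_pr).
rewrite -[RHS]big_filter; apply: perm_big; apply: uniq_perm; first exact: primes_uniq.
  by apply: filter_uniq; apply: iota_uniq.
move=> q; rewrite mem_filter mem_iota add0n subn0.
case q_in: (q \in primes n) => //=; move: q_in.
rewrite mem_primes => /and3P [_ _ /(dvdn_leq n_gt0) q_le_n].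
by rewrite (leq_ltn_trans q_le_n n_lt_N).
Qed.

(* The local factors of J_2(n), totient n and psi (n ^ 2) at a prime q
   occurring with exponent e in n (the local factor of n itself is q ^ e). *)
Definition jordan2_factor (q e : nat) : nat :=
  if e is e'.+1 then (q * q - 1) * q ^ (2 * e') else 1.
Definition totient_factor (q e : nat) : nat :=
  if e is e'.+1 then q.-1 * q ^ e' else 1.
Definition psi2_factor (q e : nat) : nat :=
  if e is e'.+1 then (q + 1) * q ^ (2 * e').+1 else 1.

Lemma primitive_pairs_prod n N : 0 < n -> n < N ->
  primitive_pairs n = \prod_(q < N | prime q) jordan2_factor q (logn q n).
Proof.
apply: (@prod_logn_recurrence _ _ (fun p e => if e is 0 then p * p - 1 else p * p)).
- by [].
- move=> p [|e] _ /=; first by rewrite muln0.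
  rewrite mulnS !expnS; move: (p * p - 1) (p ^ (2 * e)) => u v; nia.
- by rewrite /primitive_pairs !big_nat1.
move=> p m p_pr m_gt0; case: (boolP (p %| m)) => [p_dvd_m|p_ndvd_m].
  have : 0 < logn p m by rewrite logn_gt0 mem_primes p_pr m_gt0.
  by case: (logn p m) => // e _; rewrite primitive_pairs_mul_dvd.
have -> : logn p m = 0.
  by apply/eqP; rewrite -leqn0 leqNgt logn_gt0 mem_primes p_pr m_gt0.
have := primitive_pairs_mul_coprime p_pr p_ndvd_m; rewrite mulnBl mul1n; lia.
Qed.

Lemma self_prod n N : 0 < n -> n < N -> n = \prod_(q < N | prime q) q ^ (logn q n).
Proof.
by apply: (@prod_logn_recurrence id _ (fun p _ => p)) => // p e _; rewrite expnS.
Qed.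

Lemma totient_prod n N : 0 < n -> n < N ->
  totient n = \prod_(q < N | prime q) totient_factor q (logn q n).
Proof.
move=> n_gt0 n_lt_N; rewrite totientE // -prod_primes_bounded //.
by apply: eq_big_seq => p; rewrite -logn_gt0; case: (logn p n).
Qed.

Lemma psi2_prod n N : 0 < n -> n < N ->
  psi (n ^ 2) = \prod_(q < N | prime q) psi2_factor q (logn q n).
Proof.
move=> n_gt0 n_lt_N; rewrite /psi primesX // -prod_primes_bounded //.
apply: eq_big_seq => p; rewrite -logn_gt0 lognX.
by case: (logn p n) => // e _ /=; congr (_ * _ ^ _); lia.
Qed.

(* J_2(n) * n = psi(n^2) * totient n, checked factor by factor:
   (q^2 - 1) q^(2e) * q^(e+1) = (q + 1) q^(2e+1) * (q - 1) q^e. *)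
Lemma primitive_pairs_psi n : 0 < n -> primitive_pairs n * n = psi (n ^ 2) * totient n.
Proof.
move=> n_gt0; have n_lt : n < n.+1 by [].
rewrite (primitive_pairs_prod n_gt0 n_lt) (psi2_prod n_gt0 n_lt) (totient_prod n_gt0 n_lt).
rewrite [X in _ * X = _](self_prod n_gt0 n_lt) -!big_split /=.
apply: eq_bigr => q q_pr; have q_gt1 := prime_gt1 q_pr.
case: (logn q n) => [|e] //=.
rewrite mul2n -addnn !expnS expnD; move: (q ^ e) => x.
have -> : q.-1 = q - 1 by lia.
rewrite !mulnBl !mulnBr; nia.
Qed.

Section CyclicSubgroupsOfOrder.
Variables (gT : finGroupType) (k : nat).

Definition elements_of_order : {set gT} := [set g : gT | #[g]%g == k].
Definition cyclics_of_order : {set {set gT}} := [set <[g]>%g | g in elements_of_order].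
Definition cyclic_cosets : {set {set gT}} :=
  [set (x *: <[g]>)%g | x in [set: gT], g in elements_of_order].

(* Each element of order k generates exactly one cyclic subgroup of order k,
   which has totient k generators. *)
Lemma card_elements_of_order :
  #|elements_of_order| = #|cyclics_of_order| * totient k.
Proof.
rewrite -sum1_card (partition_big (fun g => <[g]>%g) (mem cyclics_of_order)); last first.
  by move=> g g_ord; apply: imset_f.
rewrite -sum_nat_const; apply: eq_bigr => H /imsetP [a]; rewrite inE => /eqP a_ord ->.
rewrite sum1dep_card -a_ord totient_gen; apply: eq_card => g.
rewrite !inE /generator; apply/idP/idP => [/andP [_ /eqP ->] //|/eqP gen_a].
by rewrite /order -gen_a eqxx andbT -/(order a) a_ord.
Qed.

Definition coset_subgroup (L : {set gT}) : {set gT} := ((repr L)^-1 *: L)%g.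

Lemma coset_subgroupE x (H : {group gT}) : coset_subgroup (x *: H)%g = H.
Proof.
rewrite /coset_subgroup.
have /lcosetP [h h_in ->] := mem_repr _ (lcoset_refl H x).
by rewrite -lcosetM invgM -mulgA mulVg mulg1 lcoset_id ?groupV.
Qed.

(* Each cyclic subgroup H of order k has #|gT : H| left cosets; by Lagrange,
   k times the number of cosets is #|gT| per subgroup. *)
Lemma card_cyclic_cosets :
  #|cyclic_cosets| * k = #|cyclics_of_order| * #|[set: gT]|.
Proof.
rewrite -sum1_card (partition_big coset_subgroup (mem cyclics_of_order)); last first.
  by move=> L /imset2P [x g _ g_ord ->]; rewrite coset_subgroupE; apply: imset_f.
rewrite big_distrl -sum_nat_const /=; apply: eq_bigr => H /imsetP [a].
rewrite inE => /eqP a_ord ->; rewrite sum1dep_card.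
have -> : [set L in cyclic_cosets | coset_subgroup L == <[a]>%g] =
          lcosets <[a]> [set: gT].
  apply/setP => L; rewrite !inE; apply/andP/lcosetsP.
    by case=> /imset2P [x g _ _ ->]; rewrite coset_subgroupE => /eqP ->; exists x.
  case=> x _ ->; rewrite coset_subgroupE; split=> //.
  by apply/imset2P; exists x a; rewrite ?inE ?a_ord.
by rewrite card_lcosets mulnC -a_ord Lagrange ?subsetT.
Qed.

End CyclicSubgroupsOfOrder.

Section LinesOfZn2.
Variable m : nat.
Notation G := (Zn2 m.+1).

Lemma expg_Zn2 (g : G) k : (g ^+ k)%g = (g *+ k)%R.
Proof. by elim: k => [|k IH] //; rewrite expgS GRing.mulrS IH. Qed.

(* The set cyc g of Defs (multiples k g, 0 <= k <= n^2) is the cyclic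
   subgroup generated by g, since the order of g divides n^2. *)
Lemma cyc_cycle (g : G) : cyc g = <[g]>%g.
Proof.
apply/setP => y; apply/imsetP/cycleP => [[k _ ->]|[i ->]].
  by exists k; rewrite expg_Zn2.
have ord_le : #[g]%g <= m.+1 ^ 2.
  apply: dvdn_leq; first by rewrite expn_gt0.
  have := order_dvdG (in_setT g).
  by rewrite cardsT card_prod card_ord mulnn.
exists (inord (i %% #[g]%g)); rewrite ?inE // -expg_Zn2 inordK ?expg_mod_order //.
exact: leq_trans (ltn_pmod i (order_gt0 g)) (leqW ord_le).
Qed.

Lemma translate_lcoset (x : G) (H : {set G}) : translate x H = (x *: H)%g.
Proof. by rewrite /translate -lcosetE. Qed.

Lemma lines_cyclic_cosets : lines m.+1 = cyclic_cosets G m.+1.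
Proof.
apply/setP => L; rewrite inE; apply/existsP/imset2P.
  case=> x /existsP [g]; rewrite cyc_cycle translate_lcoset.
  by case/andP=> g_ord /eqP ->; exists x g; rewrite ?inE.
case=> x g _; rewrite inE => g_ord ->; exists x; apply/existsP; exists g.
by rewrite cyc_cycle translate_lcoset eqxx andbT.
Qed.

Lemma expg_Zn2_eq1 (g : G) k :
  ((g ^+ k)%g == 1%g) = (m.+1 %| g.1 * k) && (m.+1 %| g.2 * k).
Proof.
have mulrn_pair (h : G) j : (h *+ j)%R = (h.1 *+ j, h.2 *+ j)%R.
  by elim: j => [|j IH]; [case: h | rewrite !GRing.mulrS IH].
rewrite expg_Zn2 mulrn_pair; case: g => a b /=.
by rewrite -[1%g]/(0%R, 0%R) xpair_eqE !Zp_mulrn -!val_eqE.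
Qed.

Lemma order_Zn2 (g : G) : (#[g]%g == m.+1) = coprime m.+1 (gcdn g.1 g.2).
Proof.
have ord_dvd : #[g]%g %| m.+1 by rewrite order_dvdn expg_Zn2_eq1 !dvdn_mull.
apply/idP/idP => [/eqP ord_g|cop]; last first.
  have := dvdnn #[g]%g; rewrite order_dvdn expg_Zn2_eq1 => /andP [n_dvd1 n_dvd2].
  have : m.+1 %| gcdn g.1 g.2 * #[g]%g by rewrite muln_gcdl dvdn_gcd n_dvd1 n_dvd2.
  by rewrite Gauss_dvdr // => n_dvd_ord; rewrite eqn_dvd ord_dvd.
(* With d = gcd(n, a, b), the multiple (n / d) g vanishes, so n <= n / d. *)
set d := gcdn m.+1 (gcdn g.1 g.2).
have d_gt0 : 0 < d by rewrite gcdn_gt0.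
have n_eq : m.+1 = m.+1 %/ d * d by rewrite divnK ?dvdn_gcdl.
have n_dvd c : d %| c -> m.+1 %| c * (m.+1 %/ d).
  by case/dvdnP=> c' ->; rewrite -mulnA [d * _]mulnC -n_eq dvdn_mull.
have : m.+1 %| m.+1 %/ d.
  rewrite -{1}ord_g order_dvdn expg_Zn2_eq1 !n_dvd //.
  - exact: dvdn_trans (dvdn_gcdr _ _) (dvdn_gcdr _ _).
  - exact: dvdn_trans (dvdn_gcdr _ _) (dvdn_gcdl _ _).
move=> /dvdn_leq; rewrite divn_gt0 // dvdn_leq ?dvdn_gcdl // => /(_ isT) n_le.
by rewrite /coprime -/d; apply/eqP; nia.
Qed.

Lemma card_elements_Zn2 : #|elements_of_order G m.+1| = primitive_pairs m.+1.
Proof.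
rewrite -sum1_card big_mkcond /=.
under eq_bigr => g _ do rewrite inE order_Zn2.
rewrite -(pair_big xpredT xpredT (fun a b : 'I_m.+1 => (coprime m.+1 (gcdn a b) : nat))) /=.
rewrite /primitive_pairs big_mkord; apply: eq_bigr => a _.
by rewrite big_mkord; apply: eq_bigr => b _; case: (coprime _ _).
Qed.

End LinesOfZn2.

Theorem mainTheorem7 (n : nat) (hn : 0 < n) : #|lines n| = psi (n ^ 2).
Proof.
case: n hn => [//|m] _.
have card_G : #|[set: Zn2 m.+1]| = m.+1 * m.+1 by rewrite cardsT card_prod card_ord.
(* #lines = #cyclic subgroups * n, and #primitive pairs = #cyclic subgroups * phi(n). *)
have card_lines : #|lines m.+1| = #|cyclics_of_order (Zn2 m.+1) m.+1| * m.+1.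
  apply/eqP; rewrite -(eqn_pmul2r (ltn0Sn m)) lines_cyclic_cosets.
  by rewrite card_cyclic_cosets card_G mulnA.
apply/eqP; rewrite -(eqn_pmul2r (totient_gt0 m.+1)) -primitive_pairs_psi //.
by rewrite card_lines -card_elements_Zn2 card_elements_of_order mulnAC.
Qed.
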